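(* Let $\lambda\in\mathbb R$, $\alpha=1-\lambda$, and let $\mathcal Q_\lambda$ be a $\lambda$-exponential family satisfying Assumption A and Assumption B (with common support $S_\lambda$). Let $\pi\in\mathcal P(\mathcal X,m)$ be $\mathcal Q_\lambda$-compatible. If $\vartheta_*\in\operatorname{dom}\varphi_\lambda$ satisfies $q^{(\alpha)}_{\vartheta_*}(T)=\pi^{(\alpha)}_{|S_\lambda}(T)$, then $\vartheta_*$ is a solution of the problem $\min_{q_\vartheta\in\mathcal Q_\lambda}RD_\alpha(\pi,q_\vartheta)$.
   Context: $\mathcal H$ is a finite-dimensional real Hilbert space; $\mathcal X$ a measurable space with measure $m$; $\mathcal P(\mathcal X,m)$ the probability densities w.r.t. $m$. For a density $p$ and measurable $f$, $p(f)=\int fp\,dm$. Conventions $\log s=-\infty$ for $s\le0$, $\exp(-\infty)=0$. Coupling $c_\lambda(u,v)=\frac1\lambda\log(1+\lambda\langle u,v\rangle)$ ($\lambda\ne0$), $c_0=\langle\cdot,\cdot\rangle$. For measurable $T:\mathcal X\to\mathcal H$: $\varphi_\lambda(\vartheta)=\log\int\exp(c_\lambda(\vartheta,T))dm$, $\operatorname{dom}\varphi_\lambda=\{\varphi_\lambda<+\infty\}$, $q_\vartheta=\exp(c_\lambda(\vartheta,T)-\varphi_\lambda(\vartheta))$, $\mathcal Q_\lambda=\{q_\vartheta:\vartheta\in\operatorname{dom}\varphi_\lambda\}$, support $S_\vartheta=\{x:1+\lambda\langle\vartheta,T(x)\rangle>0\}$. Escort: $p^{(\alpha)}=p^\alpha/\int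 p^\alpha dm$; $p_{|Y}=p\mathbf 1_Y$ and $p^{(\alpha)}_{|Y}$ is the escort of $p_{|Y}$. Rényi divergence: $RD_\alpha(p_1,p_2)=\frac1{\alpha-1}\log\int p_1^\alpha p_2^{1-\alpha}dm$ for $\alpha\ne1$, $RD_1(p_1,p_2)=KL(p_1,p_2)=\int p_1\log(p_1/p_2)dm$, with value $+\infty$ when undefined. Compatibility: $p$ is $q_\vartheta$-compatible if $\int p_{|S_\vartheta}^\alpha dm\in(0,\infty)$ and $\int Tp_{|S_\vartheta}^\alpha dm$ has finite components; $\mathcal Q_\lambda$-compatible if this holds for every $\vartheta\in\operatorname{dom}\varphi_\lambda$. Assumption A: $\alpha>0$ and $\varphi_\lambda$ is proper (never $-\infty$, nonempty domain). Assumption B: there is a nonempty $S_\lambda\subset\mathcal X$ with $S_\vartheta=S_\lambda$ for all $\vartheta\in\operatorname{dom}\varphi_\lambda$, and every $q_\vartheta\in\mathcal Q_\lambda$ is $\mathcal Q_\lambda$-compatible. *)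

From HB Require Import structures.
From mathcomp Require Import all_boot all_order all_algebra.
From mathcomp Require Import all_classical all_reals all_analysis.
Set Implicit Arguments. Unset Strict Implicit. Unset Printing Implicit Defensive.
Import Order.TTheory GRing.Theory Num.Theory.
Local Open Scope classical_set_scope.
Local Open Scope ring_scope.

Section LambdaExp.
Variables (R : realType) (n : nat) (d : measure_display) (X : measurableType d).
Variable (m : {measure set X -> \bar R}).

(* The finite-dimensional real Hilbert space H is modelled as R^n = 'rV[R]_n
   with the standard inner product. *)
Definition dotv (u v : 'rV[R]_n) : R := \sum_(i < n) u 0 i * v 0 i.

(* exp(c_lam(u,v)) as a function of t = <u,v>, with the convention that it
   vanishes outside the support {1 + lam t > 0} (lam <> 0). *)
Definition expc (lam t : R) : R :=
  if lam == 0 then expR t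
  else if 0 < 1 + lam * t then (1 + lam * t) `^ lam^-1 else 0.

Definition elog (z : \bar R) : \bar R :=
  match z with
  | EFin r => if (0 < r)%R then EFin (ln r) else -oo%E
  | +oo%E => +oo%E
  | -oo%E => -oo%E
  end.

Variables (T : X -> 'rV[R]_n) (lam : R).

Definition phi (th : 'rV[R]_n) : \bar R :=
  elog (\int[m]_x (expc lam (dotv th (T x)))%:E)%E.

Definition dom_phi (th : 'rV[R]_n) : Prop := (phi th < +oo)%E.

Definition qfam (th : 'rV[R]_n) (x : X) : R :=
  expc lam (dotv th (T x)) * expR (- fine (phi th)).

Definition supp (th : 'rV[R]_n) : set X :=
  [set x | 0 < 1 + lam * dotv th (T x)].

Definition restr (p : X -> R) (Y : set X) (x : X) : R := \1_Y x * p x.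

Definition is_density (p : X -> R) : Prop :=
  measurable_fun setT p /\ (forall x, 0 <= p x) /\
  (\int[m]_x (p x)%:E = 1)%E.

Variable alpha : R.

Definition compatible (p : X -> R) (th : 'rV[R]_n) : Prop :=
  let pS := restr p (supp th) in
  (0 < \int[m]_x ((pS x) `^ alpha)%:E < +oo)%E /\
  (forall i : 'I_n, m.-integrable setT (fun x => (T x 0 i * (pS x) `^ alpha)%:E)).

Definition Qcompatible (p : X -> R) : Prop :=
  forall th, dom_phi th -> compatible p th.

Definition AssumptionA : Prop :=
  0 < alpha /\ (forall th, phi th != -oo%E) /\ (exists th, dom_phi th).

Definition AssumptionB (S : set X) : Prop :=
  S !=set0 /\ (forall th, dom_phi th -> supp th = S) /\
  (forall th, dom_phi th -> Qcompatible (qfam th)).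

Definition escort_mean (p : X -> R) : 'rV[R]_n :=
  \row_i (Rintegral m setT (fun x => T x 0 i * (p x) `^ alpha) /
          Rintegral m setT (fun x => (p x) `^ alpha)).

End LambdaExp.

Section Renyi.
Variables (R : realType) (d : measure_display) (X : measurableType d).
Variable (m : {measure set X -> \bar R}).

(* p1^alpha p2^(1-alpha), with 0 when p1 = 0, and the value of the limit
   (0 if alpha < 1, +oo if alpha > 1) when p1 > 0 = p2 *)
Definition rd_integrand (alpha : R) (p1 p2 : X -> R) (x : X) : \bar R :=
  if p1 x == 0 then 0%E
  else if p2 x == 0 then (if alpha < 1 then 0%E else +oo%E)
  else ((p1 x) `^ alpha * (p2 x) `^ (1 - alpha))%:E.

Definition kl_integrand (p1 p2 : X -> R) (x : X) : \bar R :=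
  if p1 x == 0 then 0%E
  else if p2 x == 0 then +oo%E
  else (p1 x * ln (p1 x / p2 x))%:E.

Definition KL (p1 p2 : X -> R) : \bar R := (\int[m]_x kl_integrand p1 p2 x)%E.

Definition renyi (alpha : R) (p1 p2 : X -> R) : \bar R :=
  if alpha == 1 then KL p1 p2
  else (((alpha - 1)^-1)%:E * elog (\int[m]_x rd_integrand alpha p1 p2 x))%E.

End Renyi.

From HB Require Import structures.
From mathcomp Require Import all_boot all_order all_algebra.
From mathcomp Require Import all_classical all_reals all_analysis.
From mathcomp Require Import measurable_realfun ring lra.
Set Implicit Arguments. Unset Strict Implicit. Unset Printing Implicit Defensive.
Import Order.TTheory GRing.Theory Num.Theory.
Local Open Scope classical_set_scope.
Local Open Scope ring_scope.

(* For lam <> 0 the Renyi divergence of order alpha = 1 - lam is a decreasing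
   function of the affinity A(pi, q) = \int pi^alpha q^lam when lam > 0, an
   increasing one when lam < 0, up to a term that only depends on the common
   support S. On S, q_th^lam = (1 + lam <th, T>) / z_th^lam, so A(pi, q_th) is
   z_th^-lam times an affine function of th whose coefficients are the
   pi^alpha-moments of pi restricted to S. The escort condition makes them
   proportional to those of q_th_star, so A(pi, q_th) = k A(q_th_star, q_th) with k > 0,
   and the weighted AM-GM inequality gives lam A(q_th_star, q_th) <= lam, with
   equality at th = th_star.
   For lam = 0 the family is exponential and
   KL(pi, q_th) - KL(pi, q_th_star) = log (z_th / z_th_star) - <th - th_star, E_pi T>, which
   is nonnegative by Jensen's inequality for exp under q_th_star, as
   E_pi T = E_q_th_star T. *)

Section RealInequalities.
Variable R : realType.

Lemma expR_tangent_le (c s : R) : expR c * (1 + (s - c)) <= expR s.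
Proof.
have -> : expR s = expR c * expR (s - c) by rewrite -expRD addrC subrK.
by apply: ler_wpM2l; [exact: expR_ge0 | exact: expR_ge1Dx].
Qed.

Lemma sub_le_mul_lnB (a b : R) : 0 <= a -> 0 < b ->
  a - b <= (if a == 0 then 0 else a * (ln a - ln b)).
Proof.
move=> a_ge0 b_gt0; case: eqP => [->|/eqP a_neq0]; first by rewrite sub0r oppr_le0 ltW.
have a_gt0 : 0 < a by rewrite lt_neqAle eq_sym a_neq0.
have := expR_tangent_le (ln a) (ln b); rewrite !lnK ?posrE // => tangent.
lra.
Qed.

(* Weighted AM-GM, reversed when [1 < alpha]; multiplying by [1 - alpha] states
   both directions at once. *)
Lemma powR_mul_le_conv (alpha a b : R) : 0 <= alpha -> 0 < a -> 0 < b ->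
  (1 - alpha) * (a `^ alpha * b `^ (1 - alpha)) <=
  (1 - alpha) * (alpha * a + (1 - alpha) * b).
Proof.
move=> alpha_ge0 a_gt0 b_gt0.
set c := alpha * ln a + (1 - alpha) * ln b.
have -> : a `^ alpha * b `^ (1 - alpha) = expR c by rewrite /powR !gt_eqF // -expRD.
have [alpha_le1|alpha_gt1] := lerP alpha 1.
  have alpha1_ge0 : 0 <= 1 - alpha by rewrite subr_ge0.
  apply: (ler_wpM2l alpha1_ge0).
  have := expR_tangent_le c (ln a); have := expR_tangent_le c (ln b).
  rewrite !lnK ?posrE // => tan_b tan_a.
  have := ler_wpM2l alpha_ge0 tan_a; have := ler_wpM2l alpha1_ge0 tan_b.
  have : alpha * (expR c * (1 + (ln a - c))) +
         (1 - alpha) * (expR c * (1 + (ln b - c))) = expR c by rewrite /c; ring.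
  lra.
have alpha1_ge0 : 0 <= alpha - 1 by rewrite subr_ge0 ltW.
apply: ler_wnM2l; first by rewrite subr_le0 ltW.
have := expR_tangent_le (ln a) c; have := expR_tangent_le (ln a) (ln b).
rewrite !lnK ?posrE // => tan_b tan_c.
have := ler_wpM2l alpha1_ge0 tan_b.
have c_sub : c - ln a = (1 - alpha) * (ln b - ln a) by rewrite /c; ring.
rewrite c_sub in tan_c.
lra.
Qed.

Lemma le_elog : {homo @elog R : x y / (x <= y)%E}.
Proof.
move=> [x| |] [y| |] //=; rewrite ?lee_fin => xy; rewrite ?leey ?leNye //.
case: ifPn => x_gt0; rewrite ?leNye // (lt_le_trans x_gt0 xy) lee_fin.
by rewrite ler_ln // posrE (lt_le_trans x_gt0 xy).
Qed.

Lemma lee_wnmul2l (c : R) (x y : \bar R) : c <= 0 -> (x <= y)%E ->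
  (c%:E * y <= c%:E * x)%E.
Proof.
move=> c_le0 xy; rewrite -(opprK c) EFinN mulNe (mulNe _ x) leeN2.
by apply: lee_wpmul2l => //; rewrite lee_fin oppr_ge0.
Qed.

End RealInequalities.

Section RealIntegrals.
Context (R : realType) (d : measure_display) (X : measurableType d)
  (m : {measure set X -> \bar R}).
Local Notation integrable f := (m.-integrable setT (EFin \o f)).
Implicit Types (f g : X -> R) (k : R).

Lemma integrable_EFinD f g : integrable f -> integrable g ->
  integrable (fun x => f x + g x).
Proof.
move=> fi gi.
by apply: (eq_integrable measurableT ((EFin \o f) \+ (EFin \o g))) => //; exact: integrableD.
Qed.

Lemma integrable_EFinZ k f : integrable f -> integrable (fun x => k * f x).
Proof.
move=> fi; apply: (eq_integrable measurableT (fun x => k%:E * (EFin \o f) x)%E).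
  by move=> x _ /=; rewrite EFinM.
exact: integrableZl.
Qed.

Lemma integrable_EFinB f g : integrable f -> integrable g ->
  integrable (fun x => f x - g x).
Proof.
move=> fi gi; apply: (eq_integrable measurableT (EFin \o (fun x => f x + -1 * g x))).
  by move=> x _ /=; rewrite mulN1r.
by apply: integrable_EFinD => //; exact: integrable_EFinZ.
Qed.

Lemma integrable_EFin_ge0 f : measurable_fun setT f -> (forall x, 0 <= f x) ->
  (\int[m]_x (f x)%:E < +oo)%E -> integrable f.
Proof.
move=> mf f_ge0 fint; apply/integrableP; split; first exact/measurable_EFinP.
by under eq_integral do rewrite gee0_abs ?lee_fin //.
Qed.

Lemma integral_EFin f : integrable f -> (\int[m]_x (f x)%:E = (\int[m]_x f x)%:E)%E.
Proof. by move=> fi; rewrite fineK //; exact: integrable_fin_num. Qed.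

Lemma Rintegral_sum (I : Type) (s : seq I) (F : I -> X -> R) :
  (forall i, integrable (F i)) ->
  integrable (fun x => \sum_(i <- s) F i x) /\
  \int[m]_x (\sum_(i <- s) F i x) = \sum_(i <- s) \int[m]_x F i x.
Proof.
move=> Fi; elim: s => [|i s [sum_i sumE]].
  rewrite big_nil; under eq_Rintegral do rewrite big_nil.
  split; last by rewrite Rintegral_cst // mul0r.
  apply: (eq_integrable measurableT (cst 0%E)); last exact: integrable0.
  by move=> x _ /=; rewrite big_nil.
split.
  apply: (eq_integrable measurableT (EFin \o (fun x => F i x + \sum_(j <- s) F j x))).
    by move=> x _ /=; rewrite big_cons.
  exact: integrable_EFinD.
under eq_Rintegral do rewrite big_cons.
by rewrite RintegralD // big_cons sumE.
Qed.

Section ExtendedSum.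
Local Open Scope ereal_scope.

(* If [f] is nonnegative, [\int (f + g)] makes sense even when [\int f = +oo]. *)
Lemma integralD_ge0_integrable (f : X -> \bar R) g :
  (forall x, 0 <= f x)%E -> measurable_fun setT f -> integrable g ->
  (\int[m]_x (f x + (g x)%:E) = \int[m]_x f x + (\int[m]_x g x)%:E)%E.
Proof.
move=> f_ge0 mf gi.
have [fint|] := ltP (\int[m]_x f x)%E +oo%E.
  have fi : m.-integrable setT f.
    by apply/integrableP; split => //; under eq_integral do rewrite gee0_abs //.
  by rewrite (integralD measurableT fi gi) integral_EFin.
rewrite leye_eq => /eqP f_infty; rewrite f_infty /=.
set h := fun x => (f x + (g x)%:E)%E.
have mh : measurable_fun setT h by apply: emeasurable_funD => //; exact: measurable_int gi.
have mg : measurable_fun setT (fun x => `|(g x)%:E|)%E.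
  exact/measurableT_comp/(measurable_int _ gi).
have g_abs_fin : (\int[m]_x `|(g x)%:E| < +oo)%E by case/integrableP: gi.
have h_neg_fin : (\int[m]_x h^\- x < +oo)%E.
  apply: le_lt_trans g_abs_fin; apply: ge0_le_integral => //; first exact: measurable_funeneg.
  move=> x _; rewrite funenegE /h; have := f_ge0 x.
  case: (f x) => [r| |] //=; rewrite ?lee_fin => r_ge0; last first.
    by rewrite ge_max leNye /= lee_fin normr_ge0.
  rewrite /maxe; case: ifP => _ //=; rewrite lee_fin.
  by rewrite -normrN; apply: le_trans (ler_norm _); lra.
have h_pos_infty : (\int[m]_x h^\+ x = +oo)%E.
  have mhp : measurable_fun setT h^\+ by exact: measurable_funepos.
  have : (\int[m]_x f x <= \int[m]_x (h^\+ x + `|(g x)%:E|))%E.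
    apply: ge0_le_integral => //; first exact: emeasurable_funD.
    move=> x _; rewrite funeposE /h; have := f_ge0 x.
    case: (f x) => [r| |] //=; rewrite ?lee_fin => r_ge0.
    rewrite -EFin_max -EFinD lee_fin.
    have := ler_norm (- g x); rewrite normrN.
    have : (r + g x <= Num.max (r + g x) 0)%R by rewrite le_max lexx.
    lra.
  rewrite f_infty (ge0_integralD _ measurableT) //.
  rewrite leye_eq => /eqP; apply: contra_eq; rewrite -!ltey => h_pos_fin.
  exact: lte_add_pinfty.
rewrite integralE h_pos_infty.
have : (\int[m]_x h^\- x)%E \is a fin_num.
  by rewrite ge0_fin_numE // integral_ge0 // => x _; rewrite funeneg_ge0.
by case: (\int[m]_x h^\- x)%E.
Qed.

End ExtendedSum.

Lemma density_integrable p : is_density m p -> integrable p.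
Proof. by move=> [mp [p_ge0 p1]]; apply: integrable_EFin_ge0 => //; rewrite p1 ltry. Qed.

Lemma density_Rintegral p : is_density m p -> \int[m]_x p x = 1.
Proof. by move=> [_ [_ p1]]; rewrite /Rintegral p1. Qed.

(* Jensen's inequality for [expR], through its tangent line at the mean. *)
Lemma expR_Rintegral_le (q h : X -> R) : is_density m q ->
  integrable (fun x => h x * q x) -> integrable (fun x => expR (h x) * q x) ->
  expR (\int[m]_x (h x * q x)) <= \int[m]_x (expR (h x) * q x).
Proof.
move=> dq hq_int eq_int; set c := \int[m]_x (h x * q x).
have q_int := density_integrable dq; have q1 := density_Rintegral dq.
have hqc_int : integrable (fun x => h x * q x - c * q x).
  by apply: integrable_EFinB => //; exact: integrable_EFinZ.
have tan_int : integrable (fun x => expR c * (q x + (h x * q x - c * q x))).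
  exact/integrable_EFinZ/integrable_EFinD.
have tanE : \int[m]_x (expR c * (q x + (h x * q x - c * q x))) = expR c.
  rewrite RintegralZl //; last exact: integrable_EFinD.
  rewrite RintegralD //.
  rewrite RintegralB //; last exact: integrable_EFinZ.
  by rewrite RintegralZl // q1 mulr1 subrr addr0 mulr1.
apply: le_trans (le_Rintegral measurableT tan_int eq_int _); first by rewrite tanE.
move=> x _; have q_ge0 := dq.2.1 x.
have -> : expR c * (q x + (h x * q x - c * q x)) = expR c * (1 + (h x - c)) * q x by ring.
exact/ler_wpM2r/expR_tangent_le.
Qed.

End RealIntegrals.

Section RenyiKL.
Context (R : realType) (d : measure_display) (X : measurableType d)
  (m : {measure set X -> \bar R}).
Local Notation integrable f := (m.-integrable setT (EFin \o f)).
Implicit Types (alpha : R) (p q pi : X -> R).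

Definition renyi_affinity (alpha : R) (p q : X -> R) : R :=
  \int[m]_x (p x `^ alpha * q x `^ (1 - alpha)).

Lemma renyi_affinity_id alpha p : is_density m p -> renyi_affinity alpha p p = 1.
Proof.
move=> dp; rewrite -(density_Rintegral dp); apply: eq_Rintegral => x _.
by rewrite -powRD ?subrKC ?powRr1 ?oner_eq0 //; exact: dp.2.1.
Qed.

Lemma renyi_affinity_le alpha p q : 0 < alpha ->
  is_density m p -> is_density m q -> (forall x, (p x == 0) = (q x == 0)) ->
  integrable (fun x => p x `^ alpha * q x `^ (1 - alpha)) ->
  (1 - alpha) * renyi_affinity alpha p q <= 1 - alpha.
Proof.
move=> alpha_gt0 dp dq pq0 pq_int.
have p_int := density_integrable dp; have q_int := density_integrable dq.
have ap_int := integrable_EFinZ alpha p_int.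
have bq_int := integrable_EFinZ (1 - alpha) q_int.
have mix_int := integrable_EFinD ap_int bq_int.
have conv_int := integrable_EFinZ (1 - alpha) mix_int.
have convE : \int[m]_x ((1 - alpha) * (alpha * p x + (1 - alpha) * q x)) = 1 - alpha.
  rewrite RintegralZl //.
  rewrite RintegralD //.
  by rewrite !RintegralZl // !density_Rintegral // !mulr1 subrKC mulr1.
rewrite -[leRHS]convE /renyi_affinity -RintegralZl //.
apply: le_Rintegral => //; first exact: integrable_EFinZ.
move=> x _; have [p0|p_neq0] := eqVneq (p x) 0.
  have q0 : q x = 0 by apply/eqP; rewrite -pq0 p0.
  by rewrite p0 q0 powR0 ?gt_eqF // !(mul0r, mulr0, addr0).
have q_neq0 : q x != 0 by rewrite -pq0.
apply: powR_mul_le_conv; first exact: ltW.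
  by rewrite lt_neqAle eq_sym p_neq0; exact: dp.2.1.
by rewrite lt_neqAle eq_sym q_neq0; exact: dq.2.1.
Qed.

Lemma renyi_le_of_affinity alpha pi q (q' : X -> R) : 0 < alpha -> alpha != 1 ->
  measurable_fun setT pi -> measurable_fun setT q ->
  (forall x, (q x == 0) = (q' x == 0)) ->
  integrable (fun x => pi x `^ alpha * q x `^ (1 - alpha)) ->
  integrable (fun x => pi x `^ alpha * q' x `^ (1 - alpha)) ->
  (alpha - 1) * renyi_affinity alpha pi q <= (alpha - 1) * renyi_affinity alpha pi q' ->
  (renyi m alpha pi q <= renyi m alpha pi q')%E.
Proof.
move=> alpha_gt0 alpha_neq1 mpi mq qq' q_int q'_int le_aff.
have alpha1_neq0 : 1 - alpha != 0 by rewrite subr_eq0 eq_sym.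
pose B x : \bar R :=
  if pi x == 0 then 0 else if q x == 0 then (if alpha < 1 then 0 else +oo%E) else 0.
have B_ge0 x : (0 <= B x)%E by rewrite /B; case: ifP => //; case: ifP => //; case: ifP.
have mB : measurable_fun setT B.
  apply: measurable_fun_ifT; [exact: measurable_fun_eqr | exact: measurable_cst |].
  by apply: measurable_fun_ifT; [exact: measurable_fun_eqr | exact: measurable_cst ..].
(* Off the common zero set the integrand is finite; on it, it does not depend on [q]. *)
have rdE r : (forall x, (q x == 0) = (r x == 0)) ->
    integrable (fun x => pi x `^ alpha * r x `^ (1 - alpha)) ->
    (\int[m]_x rd_integrand alpha pi r x =
     \int[m]_x B x + (renyi_affinity alpha pi r)%:E)%E.
  move=> qr r_int; rewrite -(integralD_ge0_integrable B_ge0 mB r_int).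
  apply: eq_integral => x _; rewrite /rd_integrand /B qr.
  case: eqP => [->|_]; first by rewrite powR0 ?gt_eqF // mul0r adde0.
  by case: eqP => [->|_]; rewrite ?powR0 // ?mulr0 ?adde0 ?add0e.
rewrite /renyi (negbTE alpha_neq1) /= (rdE q (fun=> erefl) q_int) (rdE q' qq' q'_int).
have [alpha_lt1|alpha_ge1] := boolP (alpha < 1).
  have le_aff' : renyi_affinity alpha pi q' <= renyi_affinity alpha pi q.
    by rewrite -(ler_nM2l (_ : alpha - 1 < 0)) ?subr_lt0.
  apply: lee_wnmul2l; first by rewrite invr_le0 subr_le0 ltW.
  by apply/le_elog/leeD2l; rewrite lee_fin.
have alpha_gt1 : 1 < alpha by rewrite lt_neqAle eq_sym alpha_neq1 leNgt.
apply: lee_wpmul2l; first by rewrite lee_fin invr_ge0 subr_ge0 ltW.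
apply/le_elog/leeD2l; rewrite lee_fin.
by rewrite -(ler_pM2l (_ : 0 < alpha - 1)) // subr_gt0.
Qed.

Lemma renyi_le_of_proportional_affinity alpha pi q (q' : X -> R) (k : R) :
  0 < alpha -> alpha != 1 -> measurable_fun setT pi ->
  is_density m q -> is_density m q' -> (forall x, (q x == 0) = (q' x == 0)) -> 0 < k ->
  integrable (fun x => pi x `^ alpha * q x `^ (1 - alpha)) ->
  integrable (fun x => pi x `^ alpha * q' x `^ (1 - alpha)) ->
  integrable (fun x => q x `^ alpha * q' x `^ (1 - alpha)) ->
  renyi_affinity alpha pi q = k ->
  renyi_affinity alpha pi q' = k * renyi_affinity alpha q q' ->
  (renyi m alpha pi q <= renyi m alpha pi q')%E.
Proof.
move=> alpha_gt0 alpha_neq1 mpi dq dq' qq' k_gt0 q_int q'_int qq'_int aff_q aff_q'.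
apply: (renyi_le_of_affinity alpha_gt0 alpha_neq1 mpi dq.1 qq' q_int q'_int).
have aff_le := renyi_affinity_le alpha_gt0 dq dq' qq' qq'_int.
rewrite aff_q aff_q' -opprB !mulNr lerN2 mulrCA [leRHS]mulrC.
exact: ler_wpM2l (ltW k_gt0) _ _ aff_le.
Qed.

Lemma KL_le_of_ln_ratio pi q (q' : X -> R) : is_density m pi -> is_density m q ->
  (forall x, 0 < q x) -> (forall x, 0 < q' x) ->
  integrable (fun x => pi x * (ln (q x) - ln (q' x))) ->
  0 <= \int[m]_x (pi x * (ln (q x) - ln (q' x))) ->
  (KL m pi q <= KL m pi q')%E.
Proof.
move=> dpi dq q_gt0 q'_gt0 ratio_int ratio_ge0.
have [mpi [pi_ge0 _]] := dpi.
have pi_int := density_integrable dpi; have q_int := density_integrable dq.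
(* [H] is a nonnegative part of the integrand of [KL m pi r], the same for every [r]. *)
pose H x := (if pi x == 0 then 0 else pi x * (ln (pi x) - ln (q x))) + q x - pi x.
have H_ge0 x : (0 <= (H x)%:E)%E.
  by have := sub_le_mul_lnB (pi_ge0 x) (q_gt0 x); rewrite lee_fin /H; lra.
have mH : measurable_fun setT (EFin \o H).
  apply/measurable_EFinP/measurable_funB => //; apply: measurable_funD; last exact: dq.1.
  apply: measurable_fun_ifT; [exact: measurable_fun_eqr | exact: measurable_cst |].
  apply: measurable_funM => //; apply: measurable_funB.
    exact: measurableT_comp (@measurable_ln R) mpi.
  exact: measurableT_comp (@measurable_ln R) dq.1.
have KLE r : (forall x, 0 < r x) ->
    integrable (fun x => pi x * (ln (q x) - ln (r x))) ->
    KL m pi r = (\int[m]_x (H x)%:E + (\int[m]_x (pi x * (ln (q x) - ln (r x))))%:E)%E.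
  move=> r_gt0 r_int.
  transitivity (\int[m]_x ((H x)%:E + (pi x - q x + pi x * (ln (q x) - ln (r x)))%:E))%E.
    apply: eq_integral => x _; rewrite /kl_integrand /H (gt_eqF (r_gt0 x)) -EFinD.
    case: eqP => [->|/eqP pi_neq0]; congr EFin; first by ring.
    have pi_gt0 : 0 < pi x by rewrite lt_neqAle eq_sym pi_neq0 pi_ge0.
    by rewrite ln_div ?posrE //; ring.
  rewrite integralD_ge0_integrable //; last exact/integrable_EFinD/r_int/integrable_EFinB.
  congr (_ + _%:E)%E; rewrite RintegralD //; last exact: integrable_EFinB.
  by rewrite RintegralB // (density_Rintegral dpi) (density_Rintegral dq) subrr add0r.
have zero_int : integrable (fun x => pi x * (ln (q x) - ln (q x))).
  apply: (eq_integrable measurableT (cst 0%E)); last exact: integrable0.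
  by move=> x _ /=; rewrite subrr mulr0.
rewrite (KLE q) // (KLE q') //; apply: leeD2l; rewrite lee_fin.
under eq_Rintegral do rewrite subrr mulr0.
by rewrite Rintegral_cst // mul0r.
Qed.

End RenyiKL.

Section Dot.
Context (R : realType) (n : nat).
Implicit Types u v w : 'rV[R]_n.

Lemma dotvBl u v w : dotv (u - v) w = dotv u w - dotv v w.
Proof. by rewrite /dotv -sumrB; apply: eq_bigr => i _; rewrite !mxE mulrBl. Qed.

Lemma dotvZr (k : R) u w : dotv u (k *: w) = k * dotv u w.
Proof. by rewrite /dotv mulr_sumr; apply: eq_bigr => i _; rewrite mxE mulrCA. Qed.

Lemma dotv_escort_proportional (A A' k : R) (M M' th : 'rV[R]_n) :
  0 < A -> 0 < A' -> A^-1 *: M = A'^-1 *: M' ->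
  A + k * dotv th M = A / A' * (A' + k * dotv th M').
Proof.
move=> A_gt0 A'_gt0 escort.
rewrite -(scalerKV (lt0r_neq0 A_gt0) M) escort scalerA dotvZr.
by field; exact: lt0r_neq0.
Qed.

End Dot.

Section Moments.
Context (R : realType) (n : nat) (d : measure_display) (X : measurableType d)
  (m : {measure set X -> \bar R}) (T : X -> 'rV[R]_n).
Hypothesis mT : forall i, measurable_fun setT (fun x => T x 0 i).
Local Notation integrable f := (m.-integrable setT (EFin \o f)).

Definition moment (F : X -> R) : 'rV[R]_n := \row_i \int[m]_x (T x 0 i * F x).

Lemma measurable_dotv th : measurable_fun setT (fun x => dotv th (T x)).
Proof.
by apply: measurable_sum => i; exact: measurable_funM (measurable_cst _) (mT i).
Qed.

Lemma Rintegral_dotv th (F : X -> R) :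
  (forall i, integrable (fun x => T x 0 i * F x)) ->
  integrable (fun x => dotv th (T x) * F x) /\
  \int[m]_x (dotv th (T x) * F x) = dotv th (moment F).
Proof.
move=> TF_int.
have [sum_int sumE] := Rintegral_sum (index_enum 'I_n)
  (fun i => integrable_EFinZ (th 0 i) (TF_int i)).
have dotE x : dotv th (T x) * F x = \sum_(i < n) th 0 i * (T x 0 i * F x).
  by rewrite /dotv big_distrl; apply: eq_bigr => i _ /=; rewrite mulrA.
split; first by apply: (eq_integrable measurableT _ _ _ sum_int) => x _ /=; rewrite dotE.
under eq_Rintegral do rewrite dotE.
by rewrite sumE; apply: eq_bigr => i _; rewrite RintegralZl // mxE.
Qed.

Lemma Rintegral_affine_dotv (lam : R) th (F : X -> R) : integrable F ->
  (forall i, integrable (fun x => T x 0 i * F x)) ->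
  integrable (fun x => (1 + lam * dotv th (T x)) * F x) /\
  \int[m]_x ((1 + lam * dotv th (T x)) * F x) =
    \int[m]_x F x + lam * dotv th (moment F).
Proof.
move=> F_int TF_int; have [dF_int dFE] := Rintegral_dotv th TF_int.
have affE x : (1 + lam * dotv th (T x)) * F x = F x + lam * (dotv th (T x) * F x).
  by ring.
have lam_dF_int := integrable_EFinZ lam dF_int.
split.
  apply: (eq_integrable measurableT (EFin \o fun x => F x + lam * (dotv th (T x) * F x))).
    by move=> x _ /=; rewrite affE.
  exact: integrable_EFinD.
under eq_Rintegral do rewrite affE.
by rewrite RintegralD // RintegralZl // dFE.
Qed.

Lemma escort_meanE alpha p :
  escort_mean m T alpha p = (\int[m]_x p x `^ alpha)^-1 *: moment (fun x => p x `^ alpha).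
Proof. by apply/rowP => i; rewrite !mxE mulrC. Qed.

End Moments.

Section LambdaFamily.
Context (R : realType) (n : nat) (d : measure_display) (X : measurableType d)
  (m : {measure set X -> \bar R}) (T : X -> 'rV[R]_n) (lam : R).
Hypothesis mT : forall i, measurable_fun setT (fun x => T x 0 i).
Local Notation integrable f := (m.-integrable setT (EFin \o f)).

Lemma expc_ge0 t : 0 <= expc lam t.
Proof.
rewrite /expc; case: ifP => _; first exact: expR_ge0.
by case: ifP => _ //; exact: powR_ge0.
Qed.

Lemma measurable_supp_pred th :
  measurable_fun setT (fun x => 0 < 1 + lam * dotv th (T x)).
Proof.
apply: measurable_fun_ltr; first exact: measurable_cst.
apply: measurable_funD; first exact: measurable_cst.
exact/measurable_funM/measurable_dotv.
Qed.

Lemma measurable_expc th : measurable_fun setT (fun x => expc lam (dotv th (T x))).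
Proof.
rewrite /expc; case: eqP => _; first exact: measurableT_comp (measurable_dotv mT th).
apply: measurable_fun_ifT; [exact: measurable_supp_pred | | exact: measurable_cst].
apply: measurableT_comp (measurable_powR _) _; apply: measurable_funD => //.
exact/measurable_funM/measurable_dotv.
Qed.

Lemma integral_expc th : phi m T lam th != -oo%E -> dom_phi m T lam th ->
  (\int[m]_x (expc lam (dotv th (T x)))%:E = (expR (fine (phi m T lam th)))%:E)%E.
Proof.
rewrite /dom_phi /phi.
have : (0 <= \int[m]_x (expc lam (dotv th (T x)))%:E)%E.
  by apply: integral_ge0 => x _; rewrite lee_fin expc_ge0.
case: (\int[m]_x _)%E => [r| |] //= r_ge0.
by case: ifPn => // r_gt0 _ _; rewrite lnK ?posrE.
Qed.

Lemma qfam_density th : phi m T lam th != -oo%E -> dom_phi m T lam th ->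
  is_density m (qfam m T lam th).
Proof.
move=> phi_fin dth; split; [|split].
- exact/measurable_funM/measurable_cst/measurable_expc.
- by move=> x; rewrite /qfam mulr_ge0 ?expc_ge0 ?expR_ge0.
rewrite /qfam; under eq_integral do rewrite EFinM.
rewrite ge0_integralZr //.
- by rewrite integral_expc // -EFinM expRN mulfV // gt_eqF ?expR_gt0.
- exact/measurable_EFinP/measurable_expc.
- by move=> x _; rewrite lee_fin expc_ge0.
Qed.

Lemma restr_supp (p : X -> R) th x :
  restr p (supp T lam th) x = if 0 < 1 + lam * dotv th (T x) then p x else 0.
Proof.
rewrite /restr indicE; case: ifPn => [u_gt0|u_le0]; first by rewrite mem_set ?mul1r.
by rewrite memNset ?mul0r //; exact/negP.
Qed.

Lemma compatible_mass_gt0 alpha (p : X -> R) th : compatible m T lam alpha p th ->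
  0 < \int[m]_x (restr p (supp T lam th) x) `^ alpha.
Proof. by move=> [mass _]; exact: fine_gt0. Qed.

Section NonzeroLambda.
Hypotheses (lam_neq0 : lam != 0) (alpha_gt0 : 0 < 1 - lam).

Lemma qfam_eq0 th x :
  (qfam m T lam th x == 0) = ~~ (0 < 1 + lam * dotv th (T x)).
Proof.
rewrite /qfam mulf_eq0 (gt_eqF (expR_gt0 _)) orbF /expc (negbTE lam_neq0).
by case: ifPn => [u_gt0|_]; rewrite ?eqxx // gt_eqF ?powR_gt0.
Qed.

Lemma restr_qfam th : restr (qfam m T lam th) (supp T lam th) = qfam m T lam th.
Proof.
apply/funext => x; rewrite restr_supp; case: ifPn => // u_le0.
by apply/esym/eqP; rewrite qfam_eq0.
Qed.

Lemma powR_qfam th x : qfam m T lam th x `^ lam =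
  (if 0 < 1 + lam * dotv th (T x) then 1 + lam * dotv th (T x) else 0) *
  expR (- lam * fine (phi m T lam th)).
Proof.
rewrite /qfam powRM ?expc_ge0 ?expR_ge0 // /expc (negbTE lam_neq0).
congr (_ * _); last by rewrite /powR gt_eqF ?expR_gt0 // expRK mulrN mulNr.
case: ifPn => [u_gt0|_]; last by rewrite powR0.
by rewrite -powRrM mulVf // powRr1 // ltW.
Qed.

Lemma renyi_affinity_qfam (p : X -> R) th :
  measurable_fun setT p -> compatible m T lam (1 - lam) p th ->
  integrable (fun x => p x `^ (1 - lam) * qfam m T lam th x `^ (1 - (1 - lam))) /\
  renyi_affinity m (1 - lam) p (qfam m T lam th) =
    expR (- lam * fine (phi m T lam th)) *
    (\int[m]_x (restr p (supp T lam th) x) `^ (1 - lam) +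
     lam * dotv th (moment m T (fun x => (restr p (supp T lam th) x) `^ (1 - lam)))).
Proof.
move=> mp [/andP[_ mass_fin] TpS_int].
set pS := restr p (supp T lam th).
have mpS : measurable_fun setT (fun x => pS x `^ (1 - lam)).
  apply: measurableT_comp (measurable_powR _) _.
  rewrite (_ : pS = fun x => if 0 < 1 + lam * dotv th (T x) then p x else 0).
    by apply: measurable_fun_ifT; [exact: measurable_supp_pred | | exact: measurable_cst].
  by apply/funext => x; rewrite /pS restr_supp.
have pS_int : integrable (fun x => pS x `^ (1 - lam)).
  by apply: integrable_EFin_ge0 => // x; exact: powR_ge0.
have [aff_int affE] := Rintegral_affine_dotv lam th pS_int TpS_int.
have pointE x : p x `^ (1 - lam) * qfam m T lam th x `^ (1 - (1 - lam)) =
    expR (- lam * fine (phi m T lam th)) *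
    ((1 + lam * dotv th (T x)) * pS x `^ (1 - lam)).
  rewrite subKr powR_qfam /pS restr_supp; case: ifPn => _; first by ring.
  by rewrite powR0 ?gt_eqF // !(mul0r, mulr0).
split.
  apply: (eq_integrable measurableT (EFin \o fun x => expR (- lam * fine (phi m T lam th)) *
    ((1 + lam * dotv th (T x)) * pS x `^ (1 - lam)))); first by move=> x _ /=; rewrite pointE.
  exact: integrable_EFinZ.
rewrite /renyi_affinity; under eq_Rintegral do rewrite pointE.
by rewrite RintegralZl // affE.
Qed.

Lemma renyi_affinity_qfam_proportional (p p' : X -> R) th :
  measurable_fun setT p -> measurable_fun setT p' ->
  compatible m T lam (1 - lam) p th -> compatible m T lam (1 - lam) p' th ->
  escort_mean m T (1 - lam) (restr p (supp T lam th)) =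
    escort_mean m T (1 - lam) (restr p' (supp T lam th)) ->
  renyi_affinity m (1 - lam) p (qfam m T lam th) =
    \int[m]_x (restr p (supp T lam th) x) `^ (1 - lam) /
    \int[m]_x (restr p' (supp T lam th) x) `^ (1 - lam) *
    renyi_affinity m (1 - lam) p' (qfam m T lam th).
Proof.
move=> mp mp' cp cp'; rewrite !escort_meanE => escort.
have [_ ->] := renyi_affinity_qfam mp cp.
have [_ ->] := renyi_affinity_qfam mp' cp'.
rewrite [in LHS](dotv_escort_proportional _ _ (compatible_mass_gt0 cp) (compatible_mass_gt0 cp') escort).
by rewrite mulrCA.
Qed.

Lemma renyi_qfam_le (S : set X) (pi : X -> R) ths th :
  (forall t, phi m T lam t != -oo%E) ->
  (forall t, dom_phi m T lam t -> supp T lam t = S) ->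
  Qcompatible m T lam (1 - lam) (qfam m T lam ths) ->
  is_density m pi -> Qcompatible m T lam (1 - lam) pi ->
  dom_phi m T lam ths -> dom_phi m T lam th ->
  escort_mean m T (1 - lam) (qfam m T lam ths) =
    escort_mean m T (1 - lam) (restr pi S) ->
  (renyi m (1 - lam) pi (qfam m T lam ths) <=
   renyi m (1 - lam) pi (qfam m T lam th))%E.
Proof.
move=> phi_fin suppS qs_compat dpi pi_compat dths dth escort.
have dqs := qfam_density (phi_fin ths) dths.
have dq := qfam_density (phi_fin th) dth.
have qs_restr t : dom_phi m T lam t ->
    restr (qfam m T lam ths) (supp T lam t) = qfam m T lam ths.
  by move=> dt; rewrite (suppS _ dt) -(suppS _ dths) restr_qfam.
(* Rewriting both sides at once would unify [qfam] at [ths] and at [th], which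
   unfolds the Lebesgue integrals hidden in [phi]. *)
have same_zeros x : (qfam m T lam ths x == 0) = (qfam m T lam th x == 0).
  rewrite [LHS]qfam_eq0 [RHS]qfam_eq0; congr negb.
  have := congr1 (fun A : set X => `[< A x >]) (etrans (suppS _ dths) (esym (suppS _ dth))).
  by rewrite /= !asboolb.
pose k := \int[m]_x (restr pi S x) `^ (1 - lam) / \int[m]_x (qfam m T lam ths x) `^ (1 - lam).
have k_gt0 : 0 < k.
  have := compatible_mass_gt0 (pi_compat _ dths).
  have := compatible_mass_gt0 (qs_compat _ dths).
  rewrite restr_qfam (suppS _ dths) => qs_gt0 pi_gt0.
  exact: divr_gt0 pi_gt0 qs_gt0.
have affE t : dom_phi m T lam t -> renyi_affinity m (1 - lam) pi (qfam m T lam t) =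
    k * renyi_affinity m (1 - lam) (qfam m T lam ths) (qfam m T lam t).
  move=> dt; have := renyi_affinity_qfam_proportional dpi.1 dqs.1 (pi_compat _ dt) (qs_compat _ dt).
  by rewrite (qs_restr _ dt) (suppS _ dt) => ->; last exact: esym escort.
have [pis_int _] := renyi_affinity_qfam dpi.1 (pi_compat _ dths).
have [pi_int _] := renyi_affinity_qfam dpi.1 (pi_compat _ dth).
have [qsq_int _] := renyi_affinity_qfam dqs.1 (qs_compat _ dth).
have alpha_neq1 : 1 - lam != 1 by rewrite -subr_eq0 addrAC subrr sub0r oppr_eq0.
have aff_qs : renyi_affinity m (1 - lam) pi (qfam m T lam ths) = k.
  by rewrite (affE _ dths) (renyi_affinity_id _ dqs) mulr1.
exact: (renyi_le_of_proportional_affinity alpha_gt0 alpha_neq1 dpi.1 dqs dq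
  same_zeros k_gt0 pis_int pi_int qsq_int aff_qs (affE _ dth)).
Qed.

End NonzeroLambda.
End LambdaFamily.

Section ExponentialFamily.
Context (R : realType) (n : nat) (d : measure_display) (X : measurableType d)
  (m : {measure set X -> \bar R}) (T : X -> 'rV[R]_n).
Local Notation integrable f := (m.-integrable setT (EFin \o f)).
Variables (ths th : 'rV[R]_n) (cs c : R) (qs q : X -> R).
Hypotheses (qsE : forall x, qs x = expR (dotv ths (T x) - cs))
  (qE : forall x, q x = expR (dotv th (T x) - c)).
Hypotheses (dqs : is_density m qs) (dq : is_density m q).

(* [ths] maximizes [t |-> dotv t (moment qs) - c_t], by Jensen's inequality. *)
Lemma dotv_moment_le_normalizer :
  (forall i, integrable (fun x => T x 0 i * qs x)) ->
  dotv (th - ths) (moment m T qs) <= c - cs.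
Proof.
move=> Tqs_int; have [h_int hE] := Rintegral_dotv (th - ths) Tqs_int.
have expE x : expR (dotv (th - ths) (T x)) * qs x = expR (c - cs) * q x.
  by rewrite qsE qE -!expRD dotvBl; congr expR; ring.
have e_int : integrable (fun x => expR (dotv (th - ths) (T x)) * qs x).
  apply: (eq_integrable measurableT (EFin \o fun x => expR (c - cs) * q x)).
    by move=> x _ /=; rewrite expE.
  exact/integrable_EFinZ/density_integrable.
have := expR_Rintegral_le dqs h_int e_int.
rewrite hE; under eq_Rintegral do rewrite expE.
by rewrite RintegralZl ?density_Rintegral ?mulr1 ?ler_expR //; exact: density_integrable.
Qed.

Lemma Rintegral_ln_ratio (pi : X -> R) : is_density m pi ->
  (forall i, integrable (fun x => T x 0 i * pi x)) ->
  integrable (fun x => pi x * (ln (qs x) - ln (q x))) /\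
  \int[m]_x (pi x * (ln (qs x) - ln (q x))) = c - cs - dotv (th - ths) (moment m T pi).
Proof.
move=> dpi Tpi_int; have [dpi_int dpiE] := Rintegral_dotv (th - ths) Tpi_int.
have pi_int := density_integrable dpi.
have lnE x : pi x * (ln (qs x) - ln (q x)) =
    (c - cs) * pi x - dotv (th - ths) (T x) * pi x.
  by rewrite qsE qE !expRK dotvBl; ring.
split.
  apply: (eq_integrable measurableT (EFin \o fun x =>
    (c - cs) * pi x - dotv (th - ths) (T x) * pi x)); first by move=> x _ /=; rewrite lnE.
  by apply: integrable_EFinB => //; exact: integrable_EFinZ.
under eq_Rintegral do rewrite lnE.
rewrite RintegralB //; last exact: integrable_EFinZ.
by rewrite RintegralZl // density_Rintegral // mulr1 dpiE.
Qed.

Lemma KL_le_moment_matching (pi : X -> R) : is_density m pi ->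
  (forall i, integrable (fun x => T x 0 i * pi x)) ->
  (forall i, integrable (fun x => T x 0 i * qs x)) ->
  moment m T qs = moment m T pi ->
  (KL m pi qs <= KL m pi q)%E.
Proof.
move=> dpi Tpi_int Tqs_int moment_eq.
have [ratio_int ratioE] := Rintegral_ln_ratio dpi Tpi_int.
apply: KL_le_of_ln_ratio dpi dqs _ _ ratio_int _.
- by move=> x; rewrite qsE expR_gt0.
- by move=> x; rewrite qE expR_gt0.
by rewrite ratioE -moment_eq subr_ge0; exact: dotv_moment_le_normalizer.
Qed.

End ExponentialFamily.

Section ZeroLambda.
Context (R : realType) (n : nat) (d : measure_display) (X : measurableType d)
  (m : {measure set X -> \bar R}) (T : X -> 'rV[R]_n).
Hypothesis mT : forall i, measurable_fun setT (fun x => T x 0 i).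
Local Notation integrable f := (m.-integrable setT (EFin \o f)).

Lemma qfam0E th x : qfam m T 0 th x = expR (dotv th (T x) - fine (phi m T 0 th)).
Proof. by rewrite /qfam /expc eqxx expRD. Qed.

Lemma restr_supp0 (p : X -> R) th : restr p (supp T 0 th) = p.
Proof. by apply/funext => x; rewrite restr_supp mul0r addr0 ltr01. Qed.

Lemma compatible0_integrable (p : X -> R) th : (forall x, 0 <= p x) ->
  compatible m T 0 1 p th -> forall i, integrable (fun x => T x 0 i * p x).
Proof.
move=> p_ge0 [_ Tp_int] i; apply: (eq_integrable measurableT _ _ _ (Tp_int i)).
by move=> x _ /=; rewrite restr_supp0 powRr1.
Qed.

Lemma escort_mean1 (p : X -> R) : is_density m p -> escort_mean m T 1 p = moment m T p.
Proof.
move=> dp; have p1 : (fun x => p x `^ 1) = p by apply/funext => x; rewrite powRr1 // dp.2.1.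
by rewrite escort_meanE p1 density_Rintegral // invr1 scale1r.
Qed.

Lemma KL_qfam0_le (pi : X -> R) ths th :
  (forall t, phi m T 0 t != -oo%E) ->
  Qcompatible m T 0 1 (qfam m T 0 ths) ->
  is_density m pi -> Qcompatible m T 0 1 pi ->
  dom_phi m T 0 ths -> dom_phi m T 0 th ->
  escort_mean m T 1 (qfam m T 0 ths) = escort_mean m T 1 (restr pi (supp T 0 ths)) ->
  (KL m pi (qfam m T 0 ths) <= KL m pi (qfam m T 0 th))%E.
Proof.
move=> phi_fin qs_compat dpi pi_compat dths dth.
have dqs := qfam_density mT (phi_fin ths) dths.
have dq := qfam_density mT (phi_fin th) dth.
rewrite restr_supp0 (escort_mean1 dqs) (escort_mean1 dpi) => moment_eq.
exact: (KL_le_moment_matching (qfam0E ths) (qfam0E th) dqs dq dpi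
  (compatible0_integrable dpi.2.1 (pi_compat _ dths))
  (compatible0_integrable dqs.2.1 (qs_compat _ dths)) moment_eq).
Qed.

End ZeroLambda.

Theorem proposition7 (R : realType) (n : nat) (d : measure_display)
  (X : measurableType d) (m : {measure set X -> \bar R})
  (T : X -> 'rV[R]_n) (lam alpha : R) (S : set X) (pi : X -> R)
  (th_star : 'rV[R]_n) :
  (forall i : 'I_n, measurable_fun setT (fun x => T x 0 i)) ->
  alpha = 1 - lam ->
  AssumptionA m T lam alpha ->
  AssumptionB m T lam alpha S ->
  is_density m pi ->
  Qcompatible m T lam alpha pi ->
  dom_phi m T lam th_star ->
  escort_mean m T alpha (qfam m T lam th_star) =
    escort_mean m T alpha (restr pi S) ->
  forall th : 'rV[R]_n, dom_phi m T lam th ->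
    (renyi m alpha pi (qfam m T lam th_star) <=
     renyi m alpha pi (qfam m T lam th))%E.
Proof.
move=> mT -> [alpha_gt0 [phi_fin _]] [_ [suppS qfam_compat]] dpi pi_compat dths escort th dth.
have [lam0|lam_neq0] := eqVneq lam 0; last first.
  exact: (renyi_qfam_le mT lam_neq0 alpha_gt0 phi_fin suppS (qfam_compat _ dths)
    dpi pi_compat dths dth escort).
subst lam; rewrite subr0 in qfam_compat pi_compat escort *.
rewrite -(suppS _ dths) in escort; rewrite /renyi eqxx.
exact: (KL_qfam0_le mT phi_fin (qfam_compat _ dths) dpi pi_compat dths dth escort).
Qed.
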